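(* Let $B$, $C$ be unital $\mathrm{C}^*$-algebras, let $\{\phi_i\}_{i=1}^m$, $\{\psi_j\}_{j=1}^n$ be families of surjective $*$-homomorphisms $B\to C$ with $m\ge n$, and let $[c_{ij}]\in M_{m,n}(C)$ satisfy $\phi_i(b)c_{ij}=c_{ij}\psi_j(b)$ for all $b\in B$, $1\le i\le m$, $1\le j\le n$. If $[c_{ij}]$ is right invertible and $C$ has trivial center, then $m=n$ and there exist invertible matrices $E,F\in M_n(C)$ such that $E[c_{ij}]F$ is a diagonal matrix with invertible diagonal entries.
   Context: A matrix $[c_{ij}]\in M_{m,n}(C)$ is right invertible if there is $[d_{ij}]\in M_{n,m}(C)$ with $[c_{ij}][d_{ij}]=I_m$. *)

From HB Require Import structures.
From mathcomp Require Import all_boot all_order all_algebra.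
From mathcomp Require Import complex.
From mathcomp Require Import reals.
Set Implicit Arguments. Unset Strict Implicit. Unset Printing Implicit Defensive.
Import Order.TTheory GRing.Theory Num.Theory.
Local Open Scope ring_scope.
Local Close Scope term_scope.

(* The complex field over a real field R (R : realType, so R[i] = C). *)
Notation cplx R := (complex (R : rcfType)).

Definition is_unital_cstar (R : realType) (A : algType (cplx R))
    (nrm : A -> R) (st : A -> A) : Prop :=
  (forall x, 0 <= nrm x) /\
  (forall x, nrm x = 0 -> x = 0) /\
  (forall x y, nrm (x + y) <= nrm x + nrm y) /\
  (forall (a : cplx R) x, nrm (a *: x) = ComplexField.Normc.normc a * nrm x) /\
  (forall x y, nrm (x * y) <= nrm x * nrm y) /\
  (forall u : nat -> A,
      (forall e : R, 0 < e -> exists N, forall p q, (N <= p)%N -> (N <= q)%N ->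
          nrm (u p - u q) < e) ->
      exists l, forall e : R, 0 < e -> exists N, forall p, (N <= p)%N ->
          nrm (u p - l) < e) /\
  (forall x y, st (x + y) = st x + st y) /\
  (forall (a : cplx R) x, st (a *: x) = conjc a *: st x) /\
  (forall x y, st (x * y) = st y * st x) /\
  (forall x, st (st x) = x) /\
  (forall x, nrm (st x * x) = nrm x ^+ 2).
(* Unitality (1 <> 0) is built into algType. *)

Definition is_star_hom (R : realType) (A B : algType (cplx R))
    (stA : A -> A) (stB : B -> B) (f : A -> B) : Prop :=
  [/\ (forall x y, f (x + y) = f x + f y),
      (forall (a : cplx R) x, f (a *: x) = a *: f x),
      (forall x y, f (x * y) = f x * f y) &
      (forall x, f (stA x) = stB (f x))].

Definition invertible_el (A : ringType) (x : A) : Prop :=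
  exists y, x * y = 1 /\ y * x = 1.

Definition invertible_mx (A : ringType) (n : nat) (M : 'M[A]_n) : Prop :=
  exists N : 'M[A]_n, M *m N = 1%:M /\ N *m M = 1%:M.

Definition right_invertible_mx (A : ringType) (m n : nat) (M : 'M[A]_(m, n)) : Prop :=
  exists D : 'M[A]_(n, m), M *m D = 1%:M.

Definition trivial_center (R : realType) (A : algType (cplx R)) : Prop :=
  forall z : A, (forall x : A, z * x = x * z) -> exists a : cplx R, z = a%:A.

From HB Require Import structures.
From mathcomp Require Import all_boot all_order all_algebra.
From mathcomp Require Import complex.
From mathcomp Require Import reals.
From mathcomp Require Import fingroup perm.
Set Implicit Arguments. Unset Strict Implicit. Unset Printing Implicit Defensive.
Import Order.TTheory GRing.Theory Num.Theory.
Local Open Scope ring_scope.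
Local Close Scope term_scope.

(* An intertwiner x of surjective *-homomorphisms f, g has x^* x and x x^*
   central, hence scalar; the C*-identity then makes x either 0 or
   invertible.  So the intertwiners form a linear "category" in which every
   nonzero morphism is invertible, and for such entries Gaussian elimination
   goes through as over a division ring: a right invertible m x n matrix with
   n <= m has an invertible pivot in its first row, eliminating it leaves a
   right invertible Schur complement with intertwiner entries, and induction
   gives m = n together with a left inverse. *)

Section BlockElimination.
Variable K : nzRingType.

Definition left_invertible_mx m n (M : 'M[K]_(m, n)) : Prop :=
  exists G : 'M[K]_(n, m), G *m M = 1%:M.

Lemma upper_unitriangularN p q (x : 'M[K]_(p, q)) :
  block_mx 1%:M x 0 1%:M *m block_mx 1%:M (- x) 0 1%:M = 1%:M.
Proof.
rewrite mulmx_block !mulmx0 !mul0mx !mulmx1 !mul1mx !addr0 !add0r addrC subrr.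
by rewrite -scalar_mx_block.
Qed.

Lemma lower_unitriangularN p q (x : 'M[K]_(q, p)) :
  block_mx 1%:M 0 x 1%:M *m block_mx 1%:M 0 (- x) 1%:M = 1%:M.
Proof.
rewrite mulmx_block !mulmx0 !mul0mx !mulmx1 !mul1mx !addr0 !add0r subrr.
by rewrite -scalar_mx_block.
Qed.

Lemma right_invertible_mulmxr m n (M : 'M[K]_(m, n)) (P Q : 'M[K]_n) :
  P *m Q = 1%:M -> right_invertible_mx M -> right_invertible_mx (M *m P).
Proof.
by move=> PQ [D MD]; exists (Q *m D); rewrite mulmxA -(mulmxA M) PQ mulmx1.
Qed.

Lemma left_invertible_mulmxr m n (M : 'M[K]_(m, n)) (P Q : 'M[K]_n) :
  P *m Q = 1%:M -> left_invertible_mx (M *m P) -> left_invertible_mx M.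
Proof.
move=> PQ [G GMP]; exists (P *m G).
have GM : G *m M = Q by rewrite -[G *m M]mulmx1 -PQ !mulmxA -(mulmxA G) GMP mul1mx.
by rewrite -mulmxA GM.
Qed.

Lemma right_invertible_row_neq0 m n (M : 'M[K]_(m, n)) i :
  right_invertible_mx M -> exists j, M i j != 0.
Proof.
case=> D MD; case: (pickP (fun j => M i j != 0)) => [j Mij | M_i0]; first by exists j.
have := congr1 (fun A : 'M_m => A i i) MD.
rewrite !mxE eqxx mulr1n big1 => [/eqP|j _]; first by rewrite eq_sym oner_eq0.
by move/negbFE: (M_i0 j) => /eqP ->; rewrite mul0r.
Qed.

Section SchurComplement.
Variables (p m n : nat) (M : 'M[K]_(p + m, p + n)) (ai : 'M[K]_p).
Hypotheses (aiM : ai *m ulsubmx M = 1%:M) (Mai : ulsubmx M *m ai = 1%:M).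

Definition schur_complement : 'M[K]_(m, n) :=
  drsubmx M - dlsubmx M *m ai *m ursubmx M.

Local Notation L := (block_mx 1%:M 0 (dlsubmx M *m ai) 1%:M).
Local Notation U := (block_mx 1%:M (ai *m ursubmx M) 0 1%:M).
Local Notation L' := (block_mx 1%:M 0 (- (dlsubmx M *m ai)) 1%:M).
Local Notation U' := (block_mx 1%:M (- (ai *m ursubmx M)) 0 1%:M).
Local Notation S := schur_complement.

Lemma schur_factorization : M = L *m block_mx (ulsubmx M) 0 0 S *m U.
Proof.
rewrite !mulmx_block !mul1mx !mulmx1 !mul0mx !mulmx0 !addr0 !add0r.
rewrite -mulmxA aiM mulmx1 !mulmxA Mai mul1mx /S addrC subrK.
by rewrite -{1}[M]submxK.
Qed.

Let L'L : L' *m L = 1%:M.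
Proof. by rewrite -{2}(opprK (dlsubmx M *m ai)) lower_unitriangularN. Qed.

Let U'U : U' *m U = 1%:M.
Proof. by rewrite -{2}(opprK (ai *m ursubmx M)) upper_unitriangularN. Qed.

Lemma schur_block_diagonalization :
  block_mx (ulsubmx M) 0 0 S = L' *m M *m U'.
Proof.
rewrite [X in L' *m X]schur_factorization !mulmxA L'L mul1mx -(mulmxA _ U).
by rewrite upper_unitriangularN mulmx1.
Qed.

Lemma schur_complement_right_invertible :
  right_invertible_mx M -> right_invertible_mx S.
Proof.
case=> D MD; pose X := U *m D *m L.
have : block_mx (ulsubmx M) 0 0 S *m X = 1%:M.
  rewrite schur_block_diagonalization /X !mulmxA -(mulmxA (L' *m M)) U'U.
  by rewrite mulmx1 -(mulmxA L') MD mulmx1 L'L.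
rewrite -[X]submxK mulmx_block !mul0mx !add0r !addr0 scalar_mx_block.
by case/eq_block_mx => _ _ _ SX; exists (drsubmx X).
Qed.

Lemma schur_complement_left_invertible :
  left_invertible_mx S -> left_invertible_mx M.
Proof.
case=> T TS; exists (U' *m block_mx ai 0 0 T *m L').
have blkK : block_mx ai 0 0 T *m block_mx (ulsubmx M) 0 0 S = 1%:M.
  by rewrite mulmx_block !mulmx0 !mul0mx !addr0 !add0r aiM TS -scalar_mx_block.
rewrite [X in _ *m X = _]schur_factorization !mulmxA -(mulmxA _ L') L'L mulmx1.
by rewrite -(mulmxA U') blkK mulmx1 U'U.
Qed.

End SchurComplement.

Lemma schur_complement1E m n (M : 'M[K]_(1 + m, 1 + n)) (y : K) i j :
  schur_complement M y%:M i j = M (rshift 1 i) (rshift 1 j)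
    - M (rshift 1 i) (lshift n ord0) * y * M (lshift m ord0) (rshift 1 j).
Proof. by rewrite !mxE big_ord1 !mxE big_ord1 !mxE eqxx mulr1n. Qed.

End BlockElimination.

Section UnitOrZeroHoms.
Variables (K : nzRingType) (T : Type) (hom : T -> T -> K -> Prop).
Hypothesis homB : forall k l x y, hom k l x -> hom k l y -> hom k l (x - y).
Hypothesis homM : forall k l h x y, hom k l x -> hom l h y -> hom k h (x * y).
Hypothesis homV : forall k l x y, hom k l x -> x * y = 1 -> y * x = 1 -> hom l k y.
Hypothesis hom_eq0_or_unit : forall k l x, hom k l x -> x = 0 \/ invertible_el x.

Lemma hom_pivot_elimination m n (phi : 'I_(1 + m) -> T) (psi : 'I_(1 + n) -> T)
    (M : 'M[K]_(1 + m, 1 + n)) :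
  (forall i j, hom (phi i) (psi j) (M i j)) ->
  invertible_el (M (lshift m ord0) (lshift n ord0)) ->
  right_invertible_mx M ->
  exists S : 'M[K]_(m, n),
  [/\ forall i j, hom (phi (rshift 1 i)) (psi (rshift 1 j)) (S i j),
      right_invertible_mx S &
      left_invertible_mx S -> left_invertible_mx M].
Proof.
move=> M_hom [y [My yM]] Mri; exists (schur_complement M y%:M).
have aE : ulsubmx M = (M (lshift m ord0) (lshift n ord0))%:M.
  by rewrite [ulsubmx M]mx11_scalar !mxE.
have aiM : y%:M *m ulsubmx M = 1%:M by rewrite aE -scalar_mxM yM.
have Mai : ulsubmx M *m y%:M = 1%:M by rewrite aE -scalar_mxM My.
split; last exact: schur_complement_left_invertible aiM Mai.
- move=> i j; rewrite schur_complement1E.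
  apply: homB; first exact: M_hom.
  apply: homM; last exact: M_hom.
  apply: homM; first exact: M_hom.
  exact: homV (M_hom _ _) My yM.
- exact: schur_complement_right_invertible aiM Mai Mri.
Qed.

Theorem hom_right_invertible_mx_square n m (phi : 'I_m -> T) (psi : 'I_n -> T)
    (M : 'M[K]_(m, n)) :
  (n <= m)%N -> (forall i j, hom (phi i) (psi j) (M i j)) ->
  right_invertible_mx M -> m = n /\ left_invertible_mx M.
Proof.
elim: n m phi psi M => [|n IH] [|m] phi psi M // nm M_hom Mri.
- by split=> //; exists 0; apply/matrixP => [[]].
- by have [[]] := right_invertible_row_neq0 ord0 Mri.
have [j M0j] := right_invertible_row_neq0 ord0 Mri.
have M0j_unit : invertible_el (M ord0 j).
  by case: (hom_eq0_or_unit (M_hom ord0 j)) => // M0; rewrite M0 eqxx in M0j.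
pose P : 'M[K]_n.+1 := tperm_mx ord0 j.
have PP : P *m P = 1%:M by rewrite -perm_mxM tperm2 perm_mx1.
have MPE i k : (M *m P) i k = M i (tperm ord0 j k) by rewrite -xcolE mxE.
have MP_hom i k : hom (phi i) (psi (tperm ord0 j k)) ((M *m P) i k).
  by rewrite MPE; apply: M_hom.
have MP00 : (M *m P) (@lshift 1 m ord0) (@lshift 1 n ord0) = M ord0 j.
  rewrite MPE; congr (M _ _); first exact: val_inj.
  by rewrite (_ : lshift n ord0 = ord0) ?tpermL //; apply: val_inj.
have MP_pivot : invertible_el ((M *m P) (@lshift 1 m ord0) (@lshift 1 n ord0)).
  by rewrite MP00.
have [S [S_hom Sri Sli]] :=
  hom_pivot_elimination MP_hom MP_pivot (right_invertible_mulmxr PP Mri).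
have [mn Sl] := IH m _ _ _ nm S_hom Sri.
split; first by rewrite mn.
exact: left_invertible_mulmxr PP (Sli Sl).
Qed.

End UnitOrZeroHoms.

Lemma left_right_invertible_el (K : nzRingType) (x y z : K) :
  y * x = 1 -> x * z = 1 -> invertible_el x.
Proof.
move=> yx xz; exists z; split=> //.
suff -> : z = y by [].
by rewrite -[z]mul1r -yx -mulrA xz mulr1.
Qed.

Section CstarDichotomy.
Variables (R : realType) (C : algType (cplx R)) (nC : C -> R) (sC : C -> C).
Hypothesis C_cstar : is_unital_cstar nC sC.

Lemma cstar_starK : involutive sC.
Proof. by case: C_cstar => _ [_ [_ [_ [_ [_ [_ [_ [_ [sK _]]]]]]]]]. Qed.

Lemma cstar_starM x y : sC (x * y) = sC y * sC x.
Proof. by case: C_cstar => _ [_ [_ [_ [_ [_ [_ [_ [sM _]]]]]]]]. Qed.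

Lemma cstar_star0 : sC 0 = 0.
Proof.
case: C_cstar => _ [_ [_ [_ [_ [_ [sD _]]]]]].
by apply: (@addrI _ (sC 0)); rewrite -sD !addr0.
Qed.

Lemma cstar_mulstar_eq0 x : sC x * x = 0 -> x = 0.
Proof.
case: C_cstar => _ [n0 [_ [nZ [_ [_ [_ [_ [_ [_ cst]]]]]]]]] xx0.
apply: n0; apply/eqP; rewrite -sqrf_eq0 -cst xx0.
by rewrite -(scale0r (0 : C)) nZ ComplexField.Normc.normc0 mul0r.
Qed.

Hypothesis C_center : trivial_center C.

Lemma normal_central_eq0_or_unit x :
  (forall y, GRing.comm (sC x * x) y) -> (forall y, GRing.comm (x * sC x) y) ->
  x = 0 \/ invertible_el x.
Proof.
move=> /C_center [a xx_a] /C_center [b xx_b].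
have [-> | x0] := eqVneq x 0; [by left | right].
have a0 : a != 0.
  by apply: contra_neq x0 => a0; apply: cstar_mulstar_eq0; rewrite xx_a a0 scale0r.
have b0 : b != 0.
  apply: contra_neq x0 => b0; rewrite -[x]cstar_starK.
  by rewrite (@cstar_mulstar_eq0 (sC x)) ?cstar_star0 // cstar_starK xx_b b0 scale0r.
apply: (@left_right_invertible_el _ x (a^-1 *: sC x) (b^-1 *: sC x)).
  by rewrite -scalerAl xx_a scalerA mulVf // scale1r.
by rewrite -scalerCA -scalerAl xx_b scalerA mulVf // scale1r.
Qed.

End CstarDichotomy.

Section Intertwiners.
Variables (B : Type) (K : nzRingType).

Definition intertwines (f g : B -> K) (x : K) : Prop :=
  forall b, f b * x = x * g b.

Lemma intertwinesB f g x y :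
  intertwines f g x -> intertwines f g y -> intertwines f g (x - y).
Proof. by move=> fxg fyg b; rewrite mulrBr mulrBl fxg fyg. Qed.

Lemma intertwinesM f g h x y :
  intertwines f g x -> intertwines g h y -> intertwines f h (x * y).
Proof. by move=> fxg gyh b; rewrite mulrA fxg -mulrA gyh mulrA. Qed.

Lemma intertwinesV f g x y :
  intertwines f g x -> x * y = 1 -> y * x = 1 -> intertwines g f y.
Proof.
move=> fxg xy yx b.
by rewrite -[g b * y]mul1r -yx -mulrA (mulrA x) -fxg -!mulrA xy mulr1.
Qed.

Lemma intertwines_central g z :
  (forall y, exists b, g b = y) -> intertwines g g z -> forall y, GRing.comm z y.
Proof. by move=> g_surj gzg y; have [b <-] := g_surj y; rewrite /GRing.comm gzg. Qed.

End Intertwiners.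

Section StarIntertwiners.
Variables (R : realType) (B : Type) (sB : B -> B).
Variables (C : algType (cplx R)) (nC : C -> R) (sC : C -> C).
Hypothesis C_cstar : is_unital_cstar nC sC.

Definition star_surjective (f : B -> C) : Prop :=
  (forall b, f (sB b) = sC (f b)) /\ (forall y, exists b, f b = y).

Lemma intertwines_star f g x :
  (forall b, f (sB b) = sC (f b)) -> (forall b, g (sB b) = sC (g b)) ->
  intertwines f g x -> intertwines g f (sC x).
Proof.
move=> f_star g_star fxg b; have := congr1 sC (fxg (sB b)).
by rewrite f_star g_star !(cstar_starM C_cstar) !(cstar_starK C_cstar) => ->.
Qed.

Hypothesis C_center : trivial_center C.

Lemma star_intertwiner_eq0_or_unit f g x :
  star_surjective f -> star_surjective g -> intertwines f g x ->
  x = 0 \/ invertible_el x.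
Proof.
move=> [f_star f_surj] [g_star g_surj] fxg.
have gxf := intertwines_star f_star g_star fxg.
apply: (normal_central_eq0_or_unit C_cstar C_center).
- exact/(intertwines_central g_surj)/(intertwinesM gxf fxg).
- exact/(intertwines_central f_surj)/(intertwinesM fxg gxf).
Qed.

End StarIntertwiners.

Theorem lemma3p3 (R : realType) (B C : algType (cplx R))
    (nB : B -> R) (sB : B -> B) (nC : C -> R) (sC : C -> C)
    (m n : nat) (phi : 'I_m -> B -> C) (psi : 'I_n -> B -> C)
    (c : 'M[C]_(m, n)) :
  is_unital_cstar nB sB -> is_unital_cstar nC sC ->
  (forall i, is_star_hom sB sC (phi i) /\ forall y : C, exists b, phi i b = y) ->
  (forall j, is_star_hom sB sC (psi j) /\ forall y : C, exists b, psi j b = y) ->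
  (n <= m)%N ->
  (forall (b : B) i j, phi i b * c i j = c i j * psi j b) ->
  right_invertible_mx c ->
  trivial_center C ->
  m = n /\
  exists (e : m = n) (E F : 'M[C]_n),
    [/\ invertible_mx E, invertible_mx F &
        let D := E *m castmx (e, erefl n) c *m F in
        (forall i j, i != j -> D i j = 0) /\ (forall i, invertible_el (D i i))].
Proof.
move=> _ C_cstar phi_hom psi_hom nm phi_c_psi c_ri C_center.
pose hom (f g : {f : B -> C | star_surjective sB sC f}) := intertwines (sval f) (sval g).
have phi_ss i : star_surjective sB sC (phi i) by case: (phi_hom i) => [[_ _ _ ?] ?].
have psi_ss j : star_surjective sB sC (psi j) by case: (psi_hom j) => [[_ _ _ ?] ?].
have [mn [G Gc]] := @hom_right_invertible_mx_square _ _ hom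
  (fun f g => @intertwinesB _ _ _ _) (fun f g h => @intertwinesM _ _ _ _ _)
  (fun f g => @intertwinesV _ _ _ _)
  (fun f g x => star_intertwiner_eq0_or_unit C_cstar C_center (svalP f) (svalP g))
  n m (fun i => exist _ _ (phi_ss i)) (fun j => exist _ _ (psi_ss j)) c nm
  (fun i j b => phi_c_psi b i j) c_ri.
subst m; case: c_ri => F cF.
(* c is now invertible, so E := 1 and F := c^-1 turn E c F into the identity. *)
have FG : G = F by rewrite -[G]mulmx1 -cF mulmxA Gc mul1mx.
subst G; split=> //; exists erefl, 1%:M, F; split.
- by exists 1%:M; rewrite mul1mx.
- by exists c.
rewrite castmx_id mul1mx cF; split=> [i j ij | i].
  by rewrite mxE (negbTE ij).
by exists 1; rewrite mxE eqxx mulr1n mul1r.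
Qed.
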